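(* Let $n\in\mathbb{N}$ and let $A:\mathbb{R}[x_1,\dots,x_n]\to\mathbb{R}[x_1,\dots,x_n]$ be a linear map belonging to $\mathfrak{g}$. Then $A$ has a complex eigenvalue, i.e., there exist $\lambda\in\mathbb{C}$ and a nonzero polynomial $p\in\mathbb{C}[x_1,\dots,x_n]$ such that $A p=\lambda p$, where $A$ is extended $\mathbb{C}$-linearly to $\mathbb{C}[x_1,\dots,x_n]$.
   Context: Topology on polynomials: a sequence $(p_i)_{i\in\mathbb{N}_0}$ in $\mathbb{R}[x_1,\dots,x_n]$ converges to $p$ if and only if $\sup_i \deg p_i<\infty$ and for every $\alpha\in\mathbb{N}_0^n$ the $x^\alpha$-coefficient of $p_i$ converges to the $x^\alpha$-coefficient of $p$. For a linear map $A$ on $\mathbb{R}[x_1,\dots,x_n]$ and $t\in\mathbb{R}$, the map $e^{tA}$ is called well-defined if for every polynomial $f$ the partial sums $\sum_{k=0}^{N}\frac{t^k}{k!}A^k f$ converge (as $N\to\infty$) in this sense to a polynomial, which is then $e^{tA}f$. Define $\mathfrak{g}$ as the set of all linear maps $A:\mathbb{R}[x_1,\dots,x_n]\to\mathbb{R}[x_1,\dots,x_n]$ such that $e^{tA}$ is well-defined for all $t\in\mathbb{R}$. *)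

From HB Require Import structures.
From mathcomp Require Import all_boot all_order all_algebra.
From mathcomp Require Import reals.
From mathcomp Require Import complex.
From mathcomp Require Import mpoly.
Set Implicit Arguments. Unset Strict Implicit. Unset Printing Implicit Defensive.
Import Order.TTheory GRing.Theory Num.Theory.
Local Open Scope ring_scope.

Definition real_cvg (R : realType) (u : nat -> R) (l : R) : Prop :=
  forall e : R, 0 < e -> exists N : nat, forall k : nat, (N <= k)%N -> `|u k - l| < e.

Definition poly_cvg (R : realType) (n : nat) (p : nat -> {mpoly R[n]})
    (q : {mpoly R[n]}) : Prop :=
  (exists D : nat, forall i : nat, (msize (p i) <= D)%N) /\
  (forall m : 'X_{1..n}, real_cvg (fun i => (p i)@_m) q@_m).

Definition exp_partial (R : realType) (n : nat)
    (A : {mpoly R[n]} -> {mpoly R[n]}) (t : R) (f : {mpoly R[n]}) (N : nat)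
    : {mpoly R[n]} :=
  \sum_(k < N.+1) ((t ^+ k) / (k`!)%:R) *: iter k A f.

Definition exp_well_defined (R : realType) (n : nat)
    (A : {mpoly R[n]} -> {mpoly R[n]}) (t : R) : Prop :=
  forall f : {mpoly R[n]}, exists g : {mpoly R[n]}, poly_cvg (exp_partial A t f) g.

Definition lin_map (R : realType) (n : nat) (A : {mpoly R[n]} -> {mpoly R[n]}) : Prop :=
  forall (a : R) (p q : {mpoly R[n]}), A (a *: p + q) = a *: A p + A q.

Definition in_frak_g (R : realType) (n : nat) (A : {mpoly R[n]} -> {mpoly R[n]}) : Prop :=
  lin_map A /\ forall t : R, exp_well_defined A t.

(* C-linear extension of A to C[x_1..x_n] = R[x] + i R[x]:
   A_C (p1 + i p2) = A p1 + i A p2. *)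
Definition complexify (R : realType) (n : nat) (A : {mpoly R[n]} -> {mpoly R[n]})
    (p : {mpoly (complex R)[n]}) : {mpoly (complex R)[n]} :=
  map_mpoly (fun x : R => Complex x 0) (A (map_mpoly (@complex.Re R) p))
  + (Complex (0 : R) 1) *: map_mpoly (fun x : R => Complex x 0) (A (map_mpoly (@complex.Im R) p)).

(* Since e^{A} 1 converges, the partial sums have bounded degree, hence so do
   all iterates A^k 1 (each is k! times a difference of partial sums).  They
   live in the finite-dimensional space of polynomials of degree < D, so some
   nonzero q in C[X] annihilates 1, i.e. sum_i q_i A^i 1 = 0.  Factor
   q = q' (X - z) over C: if the annihilated vector u satisfies A u = z u we
   are done, otherwise q' annihilates A u - z u, and we induct on deg q. *)

From HB Require Import structures.
From mathcomp Require Import all_boot all_order all_algebra.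
From mathcomp Require Import reals complex mpoly ring.
Set Implicit Arguments. Unset Strict Implicit. Unset Printing Implicit Defensive.
Import Order.TTheory GRing.Theory Num.Theory.
Local Open Scope ring_scope.

Lemma sum_coefZ_widen (F : nzRingType) (V : lmodType F) (q : {poly F}) (u : nat -> V) k :
  (size q <= k)%N -> \sum_(i < size q) q`_i *: u i = \sum_(i < k) q`_i *: u i.
Proof.
move=> hk; rewrite (big_ord_widen _ (fun i => q`_i *: u i) hk) big_mkcond.
by apply: eq_bigr => i _; case: ltnP => // hi; rewrite nth_default ?scale0r.
Qed.

Section PolyAction.
Variables (F : nzRingType) (V : lmodType F) (B : V -> V).

Definition poly_act (q : {poly F}) (v : V) := \sum_(i < size q) q`_i *: iter i B v.

Lemma poly_actC c v : poly_act c%:P v = c *: v.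
Proof.
by rewrite /poly_act (@sum_coefZ_widen _ _ _ _ 1) ?size_polyC ?leq_b1 // big_ord1 coefC.
Qed.

Hypothesis linB : forall a u v, B (a *: u + v) = a *: B u + B v.

Lemma iter_linear k a u v : iter k B (a *: u + v) = a *: iter k B u + iter k B v.
Proof. by elim: k => //= k ->; rewrite linB. Qed.

Lemma iter_linearB k u a w : iter k B (u - a *: w) = iter k B u - a *: iter k B w.
Proof.
have -> : u - a *: w = (- a) *: w + u by rewrite scaleNr addrC.
by rewrite iter_linear scaleNr addrC.
Qed.

Lemma poly_act_mulXsubC q z v :
  poly_act (q * ('X - z%:P)) v = poly_act q (B v - z *: v).
Proof.
have hsz : (size (q * ('X - z%:P))%R <= (size q).+1)%N.
  by rewrite (leq_trans (size_mul_leq _ _)) // size_XsubC addn2.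
rewrite /poly_act (sum_coefZ_widen _ hsz) mulrBr; under eq_bigr do rewrite coefB scalerBl.
rewrite sumrB big_ord_recl big_ord_recr /= coefMX eqxx scale0r add0r.
rewrite coefMC [q`_(size q)]nth_default // mul0r scale0r addr0.
rewrite -sumrB; apply: eq_bigr => i _.
rewrite /bump leq0n add1n add0n coefMX coefMC -iterS iterSr -scalerA -scalerBr.
by rewrite iter_linearB.
Qed.
End PolyAction.

Section Eigenvector.
Variables (F : closedFieldType) (V : lmodType F) (B : V -> V).
Hypothesis linB : forall a u v, B (a *: u + v) = a *: B u + B v.

Lemma eigenvector_of_annihilating_poly (q : {poly F}) v :
  q != 0 -> v != 0 -> poly_act B q v = 0 -> exists z w, w != 0 /\ B w = z *: w.
Proof.
move: {2}(size q) (leqnn (size q)) => s; elim: s q v => [|s IH] q v.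
  by rewrite leqn0 size_poly_eq0 => /eqP ->; rewrite eqxx.
move=> hs q0 v0 hq.
have [q1 | /closed_rootP [z /factor_theorem [q' def_q]]] := eqVneq (size q) 1%N.
  move: q0 hq; rewrite (size1_polyC (eq_leq q1)) poly_actC polyC_eq0 => c0 /eqP.
  by rewrite scaler_eq0 (negPf c0) (negPf v0).
have q'0 : q' != 0 by apply: contraNneq q0 => q'0; rewrite def_q q'0 mul0r.
have [Bv | Bv] := eqVneq (B v - z *: v) 0.
  by exists z, v; split => //; apply/eqP; rewrite -subr_eq0 Bv.
apply: (IH q' (B v - z *: v)) => //; last by rewrite -poly_act_mulXsubC // -def_q.
by rewrite -ltnS (leq_trans _ hs) // def_q size_Mmonic ?monicXsubC // size_XsubC addn2.
Qed.
End Eigenvector.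

Lemma mpoly_family_dependent (F : fieldType) n D (p : nat -> {mpoly F[n]}) :
  (forall k, msize (p k) <= D)%N ->
  exists2 q : {poly F}, q != 0 & \sum_(i < size q) q`_i *: p i = 0.
Proof.
move=> hD; pose K := #|{: 'X_{1..n < D}}|.
pose M : 'M[F]_(K.+1, K) := \matrix_(k, j) (p k)@_(bmnm (enum_val j)).
have /rowV0Pn [c /sub_kermxP cM c0] : kermx M != 0.
  rewrite kermx_eq0 /row_free; apply/eqP => rkM.
  by have := rank_leq_col M; rewrite rkM ltnn.
pose q : {poly F} := \poly_(k < K.+1) c 0 (inord k).
have qc (k : 'I_K.+1) : q`_k = c 0 k by rewrite coef_poly ltn_ord inord_val.
exists q.
  by apply: contra_neq c0 => q0; apply/rowP => k; rewrite mxE -qc q0 coef0.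
rewrite (sum_coefZ_widen _ (size_poly _ _)); apply/mpolyP => m.
rewrite (big_morph _ (mcoeffD m) (mcoeff0 _ m)) mcoeff0; have [hm | hm] := ltnP (mdeg m) D.
  pose b : 'X_{1..n < D} := BMultinom hm.
  transitivity ((c *m M) 0 (enum_rank b)); last by rewrite cM mxE.
  rewrite mxE; apply: eq_bigr => k _.
  by rewrite mcoeffZ qc mxE enum_rankK.
apply: big1 => k _; rewrite mcoeffZ.
have : m \notin msupp (p k) := msize_mdeg_ge (leq_trans (hD k) hm).
by rewrite mcoeff_msupp negbK => /eqP ->; rewrite mulr0.
Qed.

Lemma msize_map_mpoly_le (R S : nzRingType) n (f : {additive R -> S}) (p : {mpoly R[n]}) :
  (msize (map_mpoly f p) <= msize p)%N.
Proof.
rewrite [X in (X <= _)%N]msizeE; apply/bigmax_leqP_seq => m + _.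
rewrite mcoeff_msupp mcoeff_map_mpoly; apply: contraR; rewrite -leqNgt => /msize_mdeg_ge.
by rewrite mcoeff_msupp negbK => /eqP ->; rewrite raddf0.
Qed.

Lemma msize_iter_bounded (R : realType) n (A : {mpoly R[n]} -> {mpoly R[n]}) t f :
  t != 0 -> (exists g, poly_cvg (exp_partial A t f) g) ->
  exists D, forall k, (msize (iter k A f) <= D)%N.
Proof.
move=> t0 [_ [[D hD] _]]; exists D => -[|k].
  by have := hD 0%N; rewrite /exp_partial big_ord1 expr0 fact0 divr1 scale1r.
have ct : t ^+ k.+1 / k.+1`!%:R != 0.
  by rewrite mulf_neq0 ?expf_neq0 ?invr_eq0 ?pnatr_eq0 -?lt0n ?fact_gt0.
have -> : iter k.+1 A f = (t ^+ k.+1 / k.+1`!%:R)^-1 *: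
    (exp_partial A t f k.+1 - exp_partial A t f k).
  by rewrite /exp_partial big_ord_recr /= addrAC subrr add0r scalerA mulVf ?scale1r.
rewrite (leq_trans (msizeZ_le _ _)) // (leq_trans (msizeD_le _ _)) //.
by rewrite msizeN geq_max !hD.
Qed.

Section Complexify.
Variables (R : realType) (n : nat).
Local Notation embed := (@map_mpoly n _ _ (fun x : R => Complex x 0)).
Local Notation mRe := (@map_mpoly n _ _ (@complex.Re R)).
Local Notation mIm := (@map_mpoly n _ _ (@complex.Im R)).

Lemma mcoeff_embed (p : {mpoly R[n]}) m : (embed p)@_m = Complex p@_m 0.
Proof. exact: (mcoeff_map_mpoly (real_complex R)). Qed.

Lemma mcoeff_mRe (p : {mpoly (complex R)[n]}) m : (mRe p)@_m = complex.Re p@_m.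
Proof. exact: (mcoeff_map_mpoly (@complex.Re R : Rcomplex R -> R)). Qed.

Lemma mcoeff_mIm (p : {mpoly (complex R)[n]}) m : (mIm p)@_m = complex.Im p@_m.
Proof. exact: (mcoeff_map_mpoly (@complex.Im R : Rcomplex R -> R)). Qed.

Lemma mRe_scale_add (a : complex R) p q :
  mRe (a *: p + q) = complex.Re a *: mRe p + ((- complex.Im a) *: mIm p + mRe q).
Proof.
apply/mpolyP => m; rewrite !(mcoeffD, mcoeffZ, mcoeff_mRe, mcoeff_mIm).
by case: a (p@_m) (q@_m) => [ar ai] [x y] [z w] /=; rewrite mulNr addrA.
Qed.

Lemma mIm_scale_add (a : complex R) p q :
  mIm (a *: p + q) = complex.Re a *: mIm p + (complex.Im a *: mRe p + mIm q).
Proof.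
apply/mpolyP => m; rewrite !(mcoeffD, mcoeffZ, mcoeff_mRe, mcoeff_mIm).
by case: a (p@_m) (q@_m) => [ar ai] [x y] [z w] /=; rewrite addrA.
Qed.

Lemma mcoeff_embed_add_i (P Q : {mpoly R[n]}) m :
  (embed P + Complex (0 : R) 1 *: embed Q)@_m = Complex P@_m Q@_m.
Proof.
rewrite mcoeffD mcoeff_embed mcoeffZ mcoeff_embed.
by apply/eqP; rewrite eq_complex /= !mul0r !mul1r !subr0 !addr0 !add0r !eqxx.
Qed.

Variable A : {mpoly R[n]} -> {mpoly R[n]}.

Lemma mcoeff_complexify p m :
  (complexify A p)@_m = Complex (A (mRe p))@_m (A (mIm p))@_m.
Proof. exact: mcoeff_embed_add_i. Qed.

Hypothesis linA : lin_map A.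

Lemma complexify_linear a p q :
  complexify A (a *: p + q) = a *: complexify A p + complexify A q.
Proof.
apply/mpolyP => m; rewrite mcoeff_complexify mcoeffD mcoeff_complexify mcoeffZ mcoeff_complexify.
rewrite mRe_scale_add mIm_scale_add !linA !(mcoeffD, mcoeffZ).
move: (A (mRe p))@_m (A (mIm p))@_m (A (mRe q))@_m (A (mIm q))@_m => x y z w.
case: a => ar ai; apply/eqP; rewrite eq_complex /=; apply/andP; split; apply/eqP; ring.
Qed.

Lemma complexify_embed P : complexify A (embed P) = embed (A P).
Proof.
have A0 : A 0 = 0.
  have := linA 1 0 0; rewrite scaler0 addr0 scale1r => A00.
  by apply: (addIr (A 0)); rewrite add0r -A00.
apply/mpolyP => m; rewrite mcoeff_complexify mcoeff_embed.
have ReP : mRe (embed P) = P by apply/mpolyP => m'; rewrite mcoeff_mRe mcoeff_embed.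
have ImP : mIm (embed P) = 0.
  by apply/mpolyP => m'; rewrite mcoeff_mIm mcoeff_embed mcoeff0.
by rewrite ReP ImP A0 mcoeff0.
Qed.

Lemma iter_complexify_embed k P : iter k (complexify A) (embed P) = embed (iter k A P).
Proof.
elim: k => [|k IH]; first by [].
rewrite !iterS IH; exact: complexify_embed.
Qed.
End Complexify.

Theorem mainTheorem1 (R : realType) (n : nat) (A : {mpoly R[n]} -> {mpoly R[n]})
    (hA : in_frak_g A) :
  exists (lambda : complex R) (p : {mpoly (complex R)[n]}),
    p != 0 /\ complexify A p = lambda *: p.
Proof.
case: hA => linA hexp.
have [D hD] := msize_iter_bounded (oner_neq0 R) (hexp 1 1).
pose g : {mpoly (complex R)[n]} := map_mpoly (fun x : R => Complex x 0) 1.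
have g0 : g != 0.
  apply/eqP => /(congr1 (mcoeff 0%MM)); rewrite mcoeff_embed mcoeff0 mcoeff1 eqxx.
  by move/eqP; rewrite eq_complex /= oner_eq0.
have hg k : (msize (iter k (complexify A) g) <= D)%N.
  by rewrite iter_complexify_embed // (leq_trans (msize_map_mpoly_le (real_complex R) _)).
have [q q0 hq] := mpoly_family_dependent hg.
have [z [w hw]] := eigenvector_of_annihilating_poly (complexify_linear linA) q0 g0 hq.
by exists z, w.
Qed.
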